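(* The system $\dot b_k=\frac{a_k^{(1)}}{1+\alpha b_{k+1}}-\frac{a_{k-1}^{(1)}}{1+\alpha b_{k-1}}$, $\dot a_k^{(j)}=a_k^{(j)}\Big(\frac{b_{k+j}}{1+\alpha b_{k+j}}-\frac{b_k}{1+\alpha b_k}\Big)+\Big(\frac{a_k^{(j+1)}}{1+\alpha b_{k+j+1}}-\frac{a_{k-1}^{(j+1)}}{1+\alpha b_{k-1}}\Big)$ ($1\le j\le m-1$), $\dot a_k^{(m)}=a_k^{(m)}\Big(\frac{b_{k+m}}{1+\alpha b_{k+m}}-\frac{b_k}{1+\alpha b_k}\Big)$ (subscripts modulo $N$) is Hamiltonian with respect to the quadratic bracket $\{\cdot,\cdot\}_2$ on $\mathbb R^{(m+1)N}(b,a^{(1)},\dots,a^{(m)})$ given below, with Hamilton function $H=\alpha^{-1}\sum_{k=1}^N\log(1+\alpha b_k)$.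
   Context: $N\ge2m+2$, $m\ge1$, $\alpha\neq0$ real; subscripts modulo $N$. Convention: $a_k^{(0)}=b_k$, $a_k^{(i)}=0$ for $i<0$ or $i>m$. The bracket $\{\cdot,\cdot\}_2$ has the following nonzero brackets between coordinates (up to antisymmetry), for $1\le i,j\le m$: $\{b_k,b_{k+1}\}_2=-a_k^{(1)}$; $\{b_k,a_{k+1}^{(j)}\}_2=-a_k^{(j+1)}$, $\{a_k^{(j)},b_{k+j+1}\}_2=-a_k^{(j+1)}$; $\{b_k,a_k^{(j)}\}_2=-b_ka_k^{(j)}$, $\{a_k^{(j)},b_{k+j}\}_2=-a_k^{(j)}b_{k+j}$; $\{a_k^{(i)},a_{k+i+1}^{(j)}\}_2=-a_k^{(i+j+1)}$; for $i<j$: $\{a_k^{(i)},a_k^{(j)}\}_2=-a_k^{(i)}a_k^{(j)}$, $\{a_k^{(j)},a_{k+j-i}^{(i)}\}_2=-a_k^{(j)}a_{k+j-i}^{(i)}$; for $i\le j$, $1\le\ell\le i$: $\{a_k^{(i)},a_{k+\ell}^{(j)}\}_2=-a_k^{(i)}a_{k+\ell}^{(j)}-a_k^{(j+\ell)}a_{k+\ell}^{(i-\ell)}$; for $i\le j$, $j-i+1\le\ell\le j$: $\{a_k^{(j)},a_{k+\ell}^{(i)}\}_2=-a_k^{(j)}a_{k+\ell}^{(i)}-a_k^{(i+\ell)}a_{k+\ell}^{(j-\ell)}$. Hamiltonian system: $\dot x=\{H,x\}$ for each coordinate $x$. *)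

From Stdlib Require Import Reals Lra Lia Arith Bool.
From Coquelicot Require Import Coquelicot.
Open Scope R_scope.
Open Scope bool_scope.

(* A point of R^{(m+1)N} is encoded by s : nat -> nat -> R, where
   s 0 k = b_k and s j k = a_k^{(j)} (1 <= j <= m), for 0 <= k < N.
   Values of s outside this range are irrelevant. *)

Definition A (m N : nat) (s : nat -> nat -> R) (i k : nat) : R :=
  if (i <=? m)%nat then s i (k mod N) else 0.

Definition km1 (N k : nat) : nat := (k + N - 1)%nat.

(* "Forward" bracket {a_k^{(i)}, a_{k+d}^{(j)}}_2 as listed in the paper
   (b = a^{(0)}), for 0 <= d < N; None when no rule is listed for this
   ordered pair. *)
Definition fwd (m N : nat) (s : nat -> nat -> R) (i k j d : nat) : option R :=
  let a := A m N s in
  if (d =? i + 1)%nat then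
    Some (- a (i + j + 1)%nat k)
  else if ((d =? 0) && (i <? j))%nat then
    Some (- (a i k * a j k))
  else if ((j <? i) && (d =? i - j))%nat then
    Some (- (a i k * a j (k + d)%nat))
  else if ((1 <=? i) && (i <=? j) && (1 <=? d) && (d <=? i)
           || (1 <=? j) && (j <=? i) && (i - j + 1 <=? d) && (d <=? i))%nat then
    Some (- (a i k * a j (k + d)%nat) - a (j + d)%nat k * a (i - d)%nat (k + d)%nat)
  else None.

Definition br (m N : nat) (s : nat -> nat -> R) (i k j l : nat) : R :=
  match fwd m N s i k j ((l + N - k) mod N) with
  | Some v => v
  | None =>
    match fwd m N s j l i ((k + N - l) mod N) with
    | Some v => - v
    | None => 0
    end
  end.

Definition upd (s : nat -> nat -> R) (j l : nat) (t : R) : nat -> nat -> R :=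
  fun i k => if ((i =? j) && (k =? l))%nat then t else s i k.

Definition H (m N : nat) (alpha : R) (s : nat -> nat -> R) : R :=
  / alpha * sum_f_R0 (fun k => ln (1 + alpha * A m N s 0 k)) (N - 1).

Definition dH (m N : nat) (alpha : R) (s : nat -> nat -> R) (j l : nat) : R :=
  Derive (fun t => H m N alpha (upd s j l t)) (s j l).

Definition ham_field (m N : nat) (alpha : R) (s : nat -> nat -> R) (i k : nat) : R :=
  sum_f_R0 (fun j =>
    sum_f_R0 (fun l => dH m N alpha s j l * br m N s j l i k) (N - 1)) m.

Definition rhs (m N : nat) (alpha : R) (s : nat -> nat -> R) (i k : nat) : R :=
  let a := A m N s in
  let b := A m N s 0 in
  if (i =? 0)%nat then
    a 1%nat k / (1 + alpha * b (k + 1)%nat) - a 1%nat (km1 N k) / (1 + alpha * b (km1 N k))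
  else if (i <? m)%nat then
    a i k * (b (k + i)%nat / (1 + alpha * b (k + i)%nat) - b k / (1 + alpha * b k))
    + (a (i + 1)%nat k / (1 + alpha * b (k + i + 1)%nat)
       - a (i + 1)%nat (km1 N k) / (1 + alpha * b (km1 N k)))
  else
    a m k * (b (k + m)%nat / (1 + alpha * b (k + m)%nat) - b k / (1 + alpha * b k)).

From Stdlib Require Import Reals Lra Lia Arith.
From Coquelicot Require Import Coquelicot.
Open Scope R_scope.

(* Only the coordinates b_l enter H, with dH/db_l = 1 / (1 + alpha b_l), so
   {H, x} = sum_l {b_l, x} / (1 + alpha b_l).  For x = a_k^{(i)} the bracket
   {b_l, x} vanishes unless l is k - 1, k, k + i or k + i + 1 modulo N; these
   offsets are pairwise distinct because N >= 2m + 2, and the four surviving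
   terms are exactly the right-hand side of the system. *)

Lemma sum_f_R0_single (f : nat -> R) (n p : nat) : (p <= n)%nat ->
  (forall l, (l <= n)%nat -> l <> p -> f l = 0) -> sum_f_R0 f n = f p.
Proof.
  induction n as [|n IH]; intros Hp Hf; cbn [sum_f_R0].
  - now replace p with 0%nat by lia.
  - destruct (Nat.eq_dec p (S n)) as [->|Hpn].
    + rewrite sum_eq_R0; [ring|]. intros l Hl; apply Hf; lia.
    + rewrite IH, (Hf (S n)) by (try intros; try apply Hf; lia). ring.
Qed.

Lemma sum_f_R0_delta (f : nat -> R) (n p : nat) : (p <= n)%nat ->
  sum_f_R0 (fun l => if (l =? p)%nat then f l else 0) n = f p.
Proof.
  intros Hp. rewrite (sum_f_R0_single _ n p Hp), Nat.eqb_refl; [reflexivity|].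
  intros l _ Hlp. now apply Nat.eqb_neq in Hlp as ->.
Qed.

Lemma is_derive_sum_f_R0 (f : nat -> R -> R) (f' : nat -> R) (x : R) (n : nat) :
  (forall k, (k <= n)%nat -> is_derive (f k) x (f' k)) ->
  is_derive (fun t => sum_f_R0 (fun k => f k t) n) x (sum_f_R0 f' n).
Proof.
  intros Hf. rewrite <- sum_n_Reals.
  apply (is_derive_ext (fun t => sum_n (fun k => f k t) n)).
  - intros t. apply sum_n_Reals.
  - exact (@is_derive_sum_n R_AbsRing R_NormedModule f n x f' Hf).
Qed.

Lemma mod_lt_double (x N : nat) : (x < 2 * N)%nat ->
  ((x < N)%nat /\ x mod N = x) \/ ((N <= x)%nat /\ x mod N = (x - N)%nat).
Proof.
  intros Hx. destruct (Nat.lt_ge_cases x N) as [HxN|HxN].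
  - left. split; [exact HxN|]. now apply Nat.mod_small.
  - right. split; [exact HxN|].
    replace x with (x - N + 1 * N)%nat at 1 by lia.
    rewrite Nat.Div0.mod_add. apply Nat.mod_small; lia.
Qed.

Lemma mod_le_pred (x N : nat) : (0 < N)%nat -> (x mod N <= N - 1)%nat.
Proof. intros HN. pose proof (Nat.mod_upper_bound x N). lia. Qed.

Lemma mod_offsets (a b N : nat) : (a < N)%nat -> (b < N)%nat ->
  ((a + N - b) mod N = 0 /\ (b + N - a) mod N = 0)%nat \/
  ((a + N - b) mod N + (b + N - a) mod N = N /\ 0 < (a + N - b) mod N < N)%nat.
Proof.
  intros Ha Hb.
  destruct (mod_lt_double (a + N - b) N ltac:(lia)) as [[? ->]|[? ->]];
  destruct (mod_lt_double (b + N - a) N ltac:(lia)) as [[? ->]|[? ->]]; lia.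
Qed.

Ltac case_nat_tests :=
  repeat (match goal with
  | |- context [Nat.eqb ?a ?b] => destruct (Nat.eqb_spec a b)
  | |- context [Nat.ltb ?a ?b] => destruct (Nat.ltb_spec a b)
  | |- context [Nat.leb ?a ?b] => destruct (Nat.leb_spec a b)
  end; try (exfalso; lia); cbn [andb orb]).

Lemma eqb_mod_offset (a b e N : nat) : (a < N)%nat -> (b < N)%nat -> (e < N)%nat ->
  (a =? (b + e) mod N)%nat = ((a + N - b) mod N =? e)%nat.
Proof.
  intros Ha Hb He.
  destruct (mod_lt_double (b + e) N ltac:(lia)) as [[? ->]|[? ->]];
  destruct (mod_lt_double (a + N - b) N ltac:(lia)) as [[? ->]|[? ->]];
  case_nat_tests; reflexivity.
Qed.

Section Coordinates.

Variables (m N : nat) (s : nat -> nat -> R).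

Lemma A_mod (i x : nat) : A m N s i (x mod N) = A m N s i x.
Proof. unfold A. now rewrite Nat.Div0.mod_mod. Qed.

Lemma A_b_lt (x : nat) : (x < N)%nat -> A m N s 0 x = s 0%nat x.
Proof. intros Hx. unfold A. simpl. now rewrite Nat.mod_small. Qed.

Lemma A_above_m (x : nat) : A m N s (m + 1) x = 0.
Proof. unfold A. destruct (Nat.leb_spec (m + 1) m); [lia|reflexivity]. Qed.

Lemma A_b_upd (j l x : nat) (t : R) : (l < N)%nat -> (x < N)%nat ->
  A m N (upd s j l t) 0 x = if (j =? 0)%nat && (x =? l)%nat then t else A m N s 0 x.
Proof.
  intros Hl Hx. unfold A, upd. simpl. rewrite Nat.mod_small by exact Hx.
  destruct j; reflexivity.
Qed.

Lemma br_b_left (i k l : nat) :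
  (1 <= m)%nat -> (2 * m + 2 <= N)%nat -> (i <= m)%nat -> (k < N)%nat -> (l < N)%nat ->
  let d := ((l + N - k) mod N)%nat in
  br m N s 0 l i k =
    (if (d =? N - 1)%nat then - A m N s (i + 1) l else 0)
  + (if (d =? 0)%nat then (if (i =? 0)%nat then 0 else - (A m N s 0 l * A m N s i l)) else 0)
  + (if (d =? i + 1)%nat then A m N s (i + 1) k else 0)
  + (if (d =? i)%nat then (if (i =? 0)%nat then 0 else A m N s i k * A m N s 0 (k + i)) else 0).
Proof.
  intros Hm HN Hi Hk Hl d. unfold br, fwd.
  pose proof (mod_offsets l k N Hl Hk) as Hd. subst d.
  generalize dependent ((k + N - l) mod N)%nat; intros d' Hd.
  generalize dependent ((l + N - k) mod N)%nat; intros d Hd.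
  destruct i as [|i]; cbn [Nat.add]; case_nat_tests; subst;
    rewrite ?Nat.add_0_r, ?Nat.sub_0_r; ring.
Qed.

Variable alpha : R.

Lemma H_upd_a (j l : nat) (t : R) : j <> 0%nat -> (l < N)%nat ->
  H m N alpha (upd s j l t) = H m N alpha s.
Proof.
  intros Hj Hl. unfold H. f_equal. apply sum_eq. intros x Hx.
  rewrite A_b_upd by lia. now apply Nat.eqb_neq in Hj as ->.
Qed.

Lemma H_upd_b (l : nat) (t : R) : (l < N)%nat ->
  H m N alpha (upd s 0 l t) =
  / alpha * sum_f_R0 (fun x => ln (1 + alpha * if (x =? l)%nat then t else A m N s 0 x)) (N - 1).
Proof.
  intros Hl. unfold H. f_equal. apply sum_eq. intros x Hx.
  now rewrite A_b_upd by lia.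
Qed.

Lemma dH_a (j l : nat) : j <> 0%nat -> (l < N)%nat -> dH m N alpha s j l = 0.
Proof.
  intros Hj Hl. unfold dH.
  rewrite (Derive_ext _ (fun _ => H m N alpha s)) by (intros; now apply H_upd_a).
  apply Derive_const.
Qed.

Lemma dH_b (l : nat) : alpha <> 0 -> (l < N)%nat -> 0 < 1 + alpha * A m N s 0 l ->
  dH m N alpha s 0 l = / (1 + alpha * A m N s 0 l).
Proof.
  intros Halpha Hl Hpos. unfold dH. apply is_derive_unique.
  eapply is_derive_ext; [intros t; symmetry; now apply H_upd_b|].
  rewrite <- (A_b_lt l Hl).
  replace (/ (1 + alpha * A m N s 0 l)) with (/ alpha *
    sum_f_R0 (fun x => if (x =? l)%nat then alpha / (1 + alpha * A m N s 0 l) else 0) (N - 1))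
    by (rewrite (sum_f_R0_delta (fun _ => _)) by lia; field; lra).
  apply is_derive_scal, is_derive_sum_f_R0. intros x _.
  destruct (Nat.eqb_spec x l).
  - auto_derive; [lra|field; lra].
  - apply (@is_derive_const R_AbsRing R_NormedModule).
Qed.

End Coordinates.

Section HamiltonianField.

Variables (m N : nat) (alpha : R) (s : nat -> nat -> R).
Hypotheses (hm : (1 <= m)%nat) (hN : (2 * m + 2 <= N)%nat) (halpha : alpha <> 0)
  (hs : forall k, (k < N)%nat -> 0 < 1 + alpha * A m N s 0 k).

Let g (x : nat) : R := / (1 + alpha * A m N s 0 x).

Lemma ham_field_b (i k : nat) :
  ham_field m N alpha s i k = sum_f_R0 (fun l => g l * br m N s 0 l i k) (N - 1).
Proof.
  unfold ham_field. rewrite (sum_f_R0_single _ m 0); [|lia|].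
  - apply sum_eq. intros l Hl. now rewrite dH_b; [|exact halpha|lia|apply hs; lia].
  - intros j _ Hj. apply sum_eq_R0. intros l Hl. rewrite dH_a by lia. ring.
Qed.

Lemma ham_field_eq (i k : nat) : (i <= m)%nat -> (k < N)%nat ->
  ham_field m N alpha s i k =
    g (k + N - 1)%nat * - A m N s (i + 1) (k + N - 1)
  + g k * (if (i =? 0)%nat then 0 else - (A m N s 0 k * A m N s i k))
  + g (k + i + 1)%nat * A m N s (i + 1) k
  + g (k + i)%nat * (if (i =? 0)%nat then 0 else A m N s i k * A m N s 0 (k + i)).
Proof.
  intros Hi Hk. rewrite ham_field_b.
  rewrite (sum_eq _ (fun l =>
      (if (l =? (k + (N - 1)) mod N)%nat then g l * - A m N s (i + 1) l else 0)
    + (if (l =? (k + 0) mod N)%nat then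
         g l * (if (i =? 0)%nat then 0 else - (A m N s 0 l * A m N s i l)) else 0)
    + (if (l =? (k + (i + 1)) mod N)%nat then g l * A m N s (i + 1) k else 0)
    + (if (l =? (k + i) mod N)%nat then
         g l * (if (i =? 0)%nat then 0 else A m N s i k * A m N s 0 (k + i)) else 0))).
  2:{ intros l Hl. rewrite br_b_left, !eqb_mod_offset by lia. cbv zeta.
      repeat destruct (_ =? _)%nat; ring. }
  rewrite !sum_plus, !sum_f_R0_delta by (apply mod_le_pred; lia).
  unfold g. rewrite !A_mod, Nat.add_0_r, Nat.add_assoc.
  now replace (k + (N - 1))%nat with (k + N - 1)%nat by lia.
Qed.

End HamiltonianField.

Theorem mainTheorem11 (m N : nat) (alpha : R)
  (hm : (1 <= m)%nat) (hN : (2 * m + 2 <= N)%nat) (halpha : alpha <> 0)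
  (s : nat -> nat -> R)
  (hs : forall k, (k < N)%nat -> 0 < 1 + alpha * A m N s 0 k) :
  forall i k, (i <= m)%nat -> (k < N)%nat ->
    rhs m N alpha s i k = ham_field m N alpha s i k.
Proof.
  intros i k Hi Hk.
  rewrite ham_field_eq by assumption.
  unfold rhs, km1; cbv zeta; unfold Rdiv.
  destruct (Nat.eqb_spec i 0) as [->|Hi0]; [|destruct (Nat.ltb_spec i m)].
  - rewrite !Nat.add_0_r, Nat.add_0_l. ring.
  - ring.
  - replace i with m by lia. rewrite !A_above_m. ring.
Qed.
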